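(* Let $k\ge 2$, let $H_0$ be a finite $k$-uniform hypergraph and let $(H_t)_{t\ge0}$ be the ILTH hypergraphs generated from $H_0$. Let $(a,b,c,d,e,f,g)$ be a 7-tuple of nonnegative integers and $t\ge 0$. If $H_t$ contains $x$ motifs with cardinality vector $(a,b,c,d,e,f,g)$, then $H_{t+1}$ contains at least $$x\big(g+(c+1)d+(b+1)f+(a+1)e+(a+1)(b+1)(c+1)\big)$$ motifs with cardinality vector $(a,b,c,d,e,f,g)$ (and hence of the same motif type).
   Context: A $k$-uniform hypergraph has every hyperedge a $k$-element subset of the vertex set. The ILTH process: given $H_t$, form $H_{t+1}$ by adding for each vertex $x\in V(H_t)$ a new vertex $x'$ (its clone), and taking $E(H_{t+1})=E(H_t)\cup\{(e\setminus\{x\})\cup\{x'\} : e\in E(H_t),\ x\in e\}$. A motif is given by three distinct hyperedges $e_1,e_2,e_3$ (ordered); its cardinality vector is $(|e_1\setminus(e_2\cup e_3)|,\ |e_2\setminus(e_1\cup e_3)|,\ |e_3\setminus(e_1\cup e_2)|,\ |(e_1\cap e_2)\setminus e_3|,\ |(e_2\cap e_3)\setminus e_1|,\ |(e_1\cap e_3)\setminus e_2|,\ |e_1\cap e_2\cap e_3|)$. Its motif type is the binary string recording which of these seven regions are nonempty, considered up to relabelling of $e_1,e_2,e_3$. *)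

From HB Require Import structures.
From mathcomp Require Import all_boot.
From mathcomp Require Import finmap.

Set Implicit Arguments.
Unset Strict Implicit.
Unset Printing Implicit Defensive.

Local Open Scope fset_scope.

Record hypergraph := Hypergraph {
  hverts : {fset nat};
  hedges : {fset {fset nat}} }.

Definition k_uniform (k : nat) (H : hypergraph) : Prop :=
  forall e, e \in hedges H -> (e `<=` hverts H) /\ #|` e| = k.

(* Offset used to name clones: the clone of x is x + clone_offset H,
   which is fresh (larger than every vertex of H). *)
Definition clone_offset (H : hypergraph) : nat := (\max_(v <- hverts H) v).+1.

Definition clone (H : hypergraph) (x : nat) : nat := x + clone_offset H.

Definition ilth_step (H : hypergraph) : hypergraph :=
  Hypergraph
    (hverts H `|` [fset clone H x | x in hverts H])
    (hedges H `|` [fset (e `\ x) `|` [fset clone H x] | e in hedges H, x in e]).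

Definition ILTH (H0 : hypergraph) (t : nat) : hypergraph := iter t ilth_step H0.

Definition card_vector (e1 e2 e3 : {fset nat}) : seq nat :=
  [:: #|` e1 `\` (e2 `|` e3)|;
      #|` e2 `\` (e1 `|` e3)|;
      #|` e3 `\` (e1 `|` e2)|;
      #|` (e1 `&` e2) `\` e3|;
      #|` (e2 `&` e3) `\` e1|;
      #|` (e1 `&` e3) `\` e2|;
      #|` e1 `&` e2 `&` e3| ].

Definition motif_count (H : hypergraph) (a b c d e f g : nat) : nat :=
  \sum_(e1 <- hedges H) \sum_(e2 <- hedges H) \sum_(e3 <- hedges H)
    [&& e1 != e2, e2 != e3, e1 != e3 &
        card_vector e1 e2 e3 == [:: a; b; c; d; e; f; g]].

(* Let (e1, e2, e3) be a motif of H_t and S a set of vertices meeting each e_i in at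
   most one vertex.  Replacing every vertex of S by its clone sends each e_i to a
   hyperedge of H_{t+1}; the replacement is injective on the vertices of H_t, so the
   image is a motif with the same cardinality vector, and since clones are fresh the
   image determines both (e1, e2, e3) and the traces of S on the e_i.  Sorting the
   admissible S inside e1 ∪ e2 ∪ e3 by which edges share their cloned vertex gives
   g sets through a common vertex, (c+1)d + (b+1)f + (a+1)e sets through a vertex of
   exactly two edges (plus possibly a private vertex of the third), and
   (a+1)(b+1)(c+1) sets of private vertices. *)

From mathcomp Require Import all_boot.
From mathcomp Require Import finmap.

Set Implicit Arguments.
Unset Strict Implicit.
Unset Printing Implicit Defensive.

Local Open Scope fset_scope.

Section InjectiveImage.
Variables (f : nat -> nat) (U : {fset nat}).
Hypothesis f_inj : {in U &, injective f}.

Lemma mem_imfset_in a A : a \in U -> A `<=` U -> (f a \in f @` A) = (a \in A).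
Proof.
move=> aU /fsubsetP AU; apply/imfsetP/idP => [[b /= bA fab]|aA]; last by exists a.
by rewrite (f_inj aU (AU b bA) fab).
Qed.

Lemma imfsetD_in A B : A `<=` U -> B `<=` U -> f @` (A `\` B) = f @` A `\` f @` B.
Proof.
move=> AU BU; apply/fsetP => v; rewrite in_fsetD.
apply/imfsetP/andP => [[a /=]|[fBv /imfsetP[a /= aA vE]]].
- rewrite in_fsetD => /andP[aB aA] ->.
  by rewrite mem_imfset_in ?(fsubsetP AU) ?aB ?in_imfset.
- exists a => //; rewrite in_fsetD aA andbT.
  by rewrite -(mem_imfset_in _ BU) ?(fsubsetP AU) // -vE.
Qed.

Lemma imfsetI_in A B : A `<=` U -> B `<=` U -> f @` (A `&` B) = f @` A `&` f @` B.
Proof. by move=> /fsubsetP AU /fsubsetP BU; apply: imfsetI => a b /AU aU /BU; apply: f_inj. Qed.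

Lemma card_imfset_in A : A `<=` U -> #|` f @` A| = #|` A|.
Proof. by move=> /fsubsetP AU; apply/eqP/card_in_imfsetP => a b /AU aU /AU; apply: f_inj. Qed.

Lemma card_vector_imfset e1 e2 e3 : e1 `<=` U -> e2 `<=` U -> e3 `<=` U ->
  card_vector (f @` e1) (f @` e2) (f @` e3) = card_vector e1 e2 e3.
Proof.
move=> e1U e2U e3U.
have subI A B : A `<=` U -> A `&` B `<=` U by move=> AU; rewrite fsubIset ?AU.
have subD A B : A `<=` U -> A `\` B `<=` U by apply: fsubset_trans (fsubsetDl _ _).
by rewrite /card_vector -!imfsetU -!imfsetI_in -?imfsetD_in ?card_imfset_in
  ?fsubUset ?subD ?subI ?e1U ?e2U ?e3U.
Qed.
End InjectiveImage.

Definition oset (o : option nat) : {fset nat} := if o is Some x then [fset x] else fset0.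

Lemma oset_inj : injective oset.
Proof.
by case=> [x|] [y|] //= => [/fset1_inj->|/fsetP/(_ x)|/fsetP/(_ y)]; rewrite ?inE ?eqxx.
Qed.

Definition opts (R : {fset nat}) : seq (option nat) := None :: [seq Some x | x <- R].

Lemma opts_uniq R : uniq (opts R).
Proof. by rewrite /= map_inj_uniq ?fset_uniq ?andbT; [apply/mapP => -[]|move=> x y []]. Qed.

Lemma size_opts R : size (opts R) = #|` R|.+1.
Proof. by rewrite /= size_map. Qed.

Lemma oset_opts o R : o \in opts R -> oset o `<=` R.
Proof. by rewrite inE => /orP[/eqP->|/mapP[x xR ->]]; rewrite ?fsub0set ?fsub1set. Qed.

Definition only (A B C : {fset nat}) : {fset nat} := A `\` (B `|` C).
Definition shared (A B C : {fset nat}) : {fset nat} := (A `&` B) `\` C.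

Lemma card_vectorE e1 e2 e3 : card_vector e1 e2 e3 =
  [:: #|` only e1 e2 e3|; #|` only e2 e1 e3|; #|` only e3 e1 e2|;
      #|` shared e1 e2 e3|; #|` shared e2 e3 e1|; #|` shared e1 e3 e2|;
      #|` e1 `&` e2 `&` e3|].
Proof. by []. Qed.

Lemma fsetI_only w A B C : w \in opts (only A B C) ->
  [/\ A `&` oset w = oset w, B `&` oset w = fset0 & C `&` oset w = fset0].
Proof.
move=> /oset_opts; rewrite fsubsetD fdisjointXU => /and3P[wA wB wC].
by split; [apply/fsetIidPr | apply/eqP; rewrite fsetI_eq0 fdisjoint_sym ..].
Qed.

Lemma fsetI_shared x A B C : x \in shared A B C ->
  [/\ A `&` oset (Some x) = oset (Some x), B `&` oset (Some x) = oset (Some x)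
     & C `&` oset (Some x) = fset0].
Proof. by rewrite !inE /= !fsetI1 => /andP[/negbTE-> /andP[-> ->]]. Qed.

Lemma fsetI_common x A B C : x \in A `&` B `&` C ->
  [/\ A `&` oset (Some x) = oset (Some x), B `&` oset (Some x) = oset (Some x)
     & C `&` oset (Some x) = oset (Some x)].
Proof. by rewrite !inE /= !fsetI1 => /andP[/andP[-> ->] ->]. Qed.

(* A set S of cloned vertices is recorded by its traces (e1 ∩ S, e2 ∩ S, e3 ∩ S),
   each empty or a singleton; S is recovered as their union. *)
Definition trace := (option nat * option nat * option nat)%type.

Definition trace_set (u : trace) : {fset nat} := oset u.1.1 `|` oset u.1.2 `|` oset u.2.

Definition is_trace (e1 e2 e3 : {fset nat}) (u : trace) : Prop :=
  [/\ e1 `&` trace_set u = oset u.1.1, e2 `&` trace_set u = oset u.1.2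
    & e3 `&` trace_set u = oset u.2].

Definition linked (o o' : option nat) : bool := (o != None) && (o == o').

(* Distinct blocks of [choices] have distinct link patterns. *)
Definition link_pattern (u : trace) : bool * bool * bool :=
  (linked u.1.1 u.1.2, linked u.1.2 u.2, linked u.1.1 u.2).

Lemma linked_Some x : linked (Some x) (Some x).
Proof. by rewrite /linked eqxx. Qed.

Lemma unlinked e o o' : e `&` oset o = oset o -> e `&` oset o' = fset0 -> linked o o' = false.
Proof.
case: o => [x|] // ex eo'; apply/negbTE; rewrite /linked /=; apply/eqP => xo'.
by move: eo'; rewrite -xo' ex => /fsetP/(_ x); rewrite /oset !inE eqxx.
Qed.

Section Choices.
Variables e1 e2 e3 : {fset nat}.

Definition block (p : bool * bool * bool) : seq trace :=
  match p with
  | (true, true, true) => [seq (Some x, Some x, Some x) | x <- e1 `&` e2 `&` e3]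
  | (true, false, false) =>
      [seq (Some x, Some x, w) | x <- shared e1 e2 e3, w <- opts (only e3 e1 e2)]
  | (false, false, true) =>
      [seq (Some x, w, Some x) | x <- shared e1 e3 e2, w <- opts (only e2 e1 e3)]
  | (false, true, false) =>
      [seq (w, Some x, Some x) | x <- shared e2 e3 e1, w <- opts (only e1 e2 e3)]
  | (false, false, false) =>
      [seq (w12, w3) | w12 <- [seq (w1, w2) | w1 <- opts (only e1 e2 e3),
                                              w2 <- opts (only e2 e1 e3)],
                       w3 <- opts (only e3 e1 e2)]
  | _ => [::]
  end.

Definition choices : seq trace :=
  [seq u | p <- [:: (true, true, true); (true, false, false); (false, false, true);
                    (false, true, false); (false, false, false)], u <- block p].

Lemma blockP p u : u \in block p -> is_trace e1 e2 e3 u /\ link_pattern u = p.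
Proof.
rewrite /is_trace /trace_set /link_pattern.
case: p => [[[] []] []]; rewrite /block ?in_nil //.
- move=> /mapP[x /fsetI_common[x1 x2 x3] ->] /=.
  by rewrite !fsetUid x1 x2 x3 linked_Some.
- move=> /allpairsP[[x w] [/= /fsetI_shared[x1 x2 x3] /fsetI_only[w3 w1 w2] ->]] /=.
  rewrite linked_Some (unlinked x1 w1).
  by rewrite !fsetIUr x1 x2 x3 w1 w2 w3 ?fsetU0 ?fset0U ?fsetUid.
- move=> /allpairsP[[x w] [/= /fsetI_shared[x2 x3 x1] /fsetI_only[w1 w2 w3] ->]] /=.
  rewrite linked_Some (unlinked w1 x1).
  by rewrite !fsetIUr x1 x2 x3 w1 w2 w3 ?fsetU0 ?fset0U ?fsetUid.
- move=> /allpairsP[[x w] [/= /fsetI_shared[x1 x3 x2] /fsetI_only[w2 w1 w3] ->]] /=.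
  rewrite linked_Some (unlinked x1 w1) (unlinked w2 x2).
  by rewrite !fsetIUr x1 x2 x3 w1 w2 w3 ?fsetU0 ?fset0U ?fsetUid.
- move=> /allpairsP[[w12 w3] [/allpairsP[[w1 w2] [/= h1 h2 ->]] h3 ->]] /=.
  have [a1 a2 a3] := fsetI_only h1; have [b2 b1 b3] := fsetI_only h2.
  have [c3 c1 c2] := fsetI_only h3.
  rewrite (unlinked a1 b1) (unlinked b2 c2) (unlinked a1 c1).
  by rewrite !fsetIUr a1 a2 a3 b1 b2 b3 c1 c2 c3 ?fsetU0 ?fset0U.
Qed.

Lemma uniq_block p : uniq (block p).
Proof.
case: p => [[[] []] []]; rewrite /block //.
- by rewrite map_inj_uniq ?fset_uniq // => x y [].
- by rewrite allpairs_uniq ?fset_uniq ?opts_uniq // => -[x w] [y w'] _ _ [-> _ ->].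
- by rewrite allpairs_uniq ?fset_uniq ?opts_uniq // => -[x w] [y w'] _ _ [-> -> _].
- by rewrite allpairs_uniq ?fset_uniq ?opts_uniq // => -[x w] [y w'] _ _ [-> -> _].
- rewrite allpairs_uniq ?opts_uniq // => [|[? ?] [? ?] _ _ [-> ->] //].
  by rewrite allpairs_uniq ?opts_uniq // => -[? ?] [? ?] _ _ [-> ->].
Qed.

Lemma uniq_choices : uniq choices.
Proof.
apply: allpairs_uniq_dep => [//|p _|]; first exact: uniq_block.
move=> v v' /allpairsPdep[p [u [_ /blockP[_ pu] ->]]].
move=> /allpairsPdep[p' [u' [_ /blockP[_ pu'] ->]]] /= uu'.
by rewrite -pu -pu' uu'.
Qed.

Lemma is_trace_choices u : u \in choices -> is_trace e1 e2 e3 u.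
Proof. by move=> /allpairsPdep[p [v [_ /blockP[tr _] ->]]]. Qed.

Lemma size_choices a b c d e f g : card_vector e1 e2 e3 = [:: a; b; c; d; e; f; g] ->
  size choices = (g + c.+1 * d + b.+1 * f + a.+1 * e + a.+1 * b.+1 * c.+1)%N.
Proof.
rewrite card_vectorE => -[<- <- <- <- <- <- <-].
rewrite size_allpairs_dep sumnE big_map !big_cons big_nil /block.
rewrite size_map !size_allpairs !size_opts addn0 ![in LHS]addnA.
by rewrite (mulnC #|` shared e1 e2 e3|) (mulnC #|` shared e1 e3 e2|) (mulnC #|` shared e2 e3 e1|).
Qed.

End Choices.

Section Cloning.
Variable H : hypergraph.
Local Notation V := (hverts H).

Definition clone_on (S : {fset nat}) (v : nat) : nat := if v \in S then clone H v else v.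

Lemma vertex_lt_clone_offset v : v \in V -> v < clone_offset H.
Proof. by move=> vV; rewrite ltnS (leq_bigmax_seq (F := id) _ vV). Qed.

Lemma clone_notin_verts v : clone H v \notin V.
Proof. by apply/negP => /vertex_lt_clone_offset; rewrite ltnNge leq_addl. Qed.

Lemma clone_on_inj S : {in V &, injective (clone_on S)}.
Proof.
move=> v w vV wV; rewrite /clone_on.
case: (v \in S); case: (w \in S); [exact: addIn | move=> cv_w | move=> v_cw | by []].
- by move: (clone_notin_verts v); rewrite cv_w wV.
- by move: (clone_notin_verts w); rewrite -v_cw vV.
Qed.

Lemma clone_onE S e : clone_on S @` e = (e `\` S) `|` clone H @` (e `&` S).
Proof.
apply/fsetP => v; rewrite in_fsetU in_fsetD; apply/imfsetP/orP => /=.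
- move=> [w we ->]; rewrite /clone_on; case: ifP => wS; last by left; rewrite wS.
  by right; rewrite in_imfset // in_fsetI we wS.
- case=> [/andP[vS ve]|/imfsetP[w /= /fsetIP[we wS] ->]].
    by exists v; rewrite // /clone_on (negbTE vS).
  by exists w; rewrite // /clone_on wS.
Qed.

Lemma clone_on_traces S S' e e' : e `<=` V -> e' `<=` V ->
  clone_on S @` e = clone_on S' @` e' -> e = e' /\ e `&` S = e' `&` S'.
Proof.
have clones_outside (B : {fset nat}) : [disjoint clone H @` B & V].
  by apply/fdisjointP => _ /imfsetP[v /= _ ->]; apply: clone_notin_verts.
(* Intersecting with V keeps the uncloned part of an image, removing V keeps the clones. *)
have separate A (B : {fset nat}) : A `<=` V ->
    (A `|` clone H @` B) `&` V = A /\ (A `|` clone H @` B) `\` V = clone H @` B.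
  move=> AV; rewrite fsetIUl fsetDUl (fsetIidPl AV) (fsetDidPl _ _ (clones_outside B)).
  by move: (clones_outside B) AV; rewrite -fsetI_eq0 -fsetD_eq0 => /eqP-> /eqP->;
    rewrite fsetU0 fset0U.
have subD A B : A `<=` V -> A `\` B `<=` V by apply: fsubset_trans (fsubsetDl _ _).
move=> eV e'V /(congr1 (fun X => (X `&` V, X `\` V))); rewrite !clone_onE /=.
have [-> ->] := separate _ (e `&` S) (subD _ S eV).
have [-> ->] := separate _ (e' `&` S') (subD _ S' e'V).
case=> eDS clonesS.
have eIS : e `&` S = e' `&` S'.
  apply/fsetP => v; move: (congr1 (fun X => clone H v \in X) clonesS).
  by rewrite /= !mem_imfset //; apply: addIn.
by split; rewrite // -(fsetID S e) -(fsetID S' e') eIS eDS.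
Qed.

Lemma clone_on_edge S e o : e \in hedges H -> e `&` S = oset o ->
  clone_on S @` e \in hedges (ilth_step H).
Proof.
rewrite clone_onE /= in_fsetU => eH eS.
have -> : e `\` S = e `\` oset o by rewrite -eS fsetDIr fsetDv fset0U.
case: o eS => [x|] /= eS; last by rewrite fsetD0 eS imfset0 fsetU0 eH.
have xe : x \in e by move/fsetP: eS => /(_ x); rewrite in_fsetI fset11 => /andP[].
by rewrite eS imfset_fset1; apply/orP; right; apply/imfset2P; exists e => //; exists x.
Qed.

End Cloning.

Definition edges_in_verts (H : hypergraph) : Prop :=
  forall e, e \in hedges H -> e `<=` hverts H.

Lemma edges_in_verts_step H : edges_in_verts H -> edges_in_verts (ilth_step H).
Proof.
move=> HV e; rewrite in_fsetU => /orP[/HV eV|/imfset2P[e' /HV e'V [x /= xe' ->]]].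
  by rewrite fsubsetU ?eV.
rewrite fsubUset fsub1set in_fsetU in_imfset ?orbT ?(fsubsetP e'V) //= andbT.
by rewrite fsubsetU // (fsubset_trans (fsubsetDl _ _) e'V).
Qed.

Lemma edges_in_verts_ILTH k H0 t : k_uniform k H0 -> edges_in_verts (ILTH H0 t).
Proof. by move=> H0k; elim: t => [e /H0k[]|t]; last exact: edges_in_verts_step. Qed.

Definition triple := ({fset nat} * {fset nat} * {fset nat})%type.

Definition triples (E : seq {fset nat}) : seq triple :=
  [seq (e12, e3) | e12 <- [seq (e1, e2) | e1 <- E, e2 <- E], e3 <- E].

Definition is_motif (v : seq nat) (m : triple) : bool :=
  let: (e1, e2, e3) := m in [&& e1 != e2, e2 != e3, e1 != e3 & card_vector e1 e2 e3 == v].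

Definition motifs (H : hypergraph) (v : seq nat) : seq triple :=
  [seq m <- triples (hedges H) | is_motif v m].

Lemma motif_countE H a b c d e f g :
  motif_count H a b c d e f g = size (motifs H [:: a; b; c; d; e; f; g]).
Proof. by rewrite size_filter -sumn_count sumnE big_map !big_allpairs. Qed.

Lemma uniq_motifs H v : uniq (motifs H v).
Proof.
by rewrite filter_uniq // !allpairs_uniq ?fset_uniq // => -[? ?] [? ?] _ _ [-> ->].
Qed.

Lemma mem_motifs H v e1 e2 e3 : ((e1, e2, e3) \in motifs H v) =
  is_motif v (e1, e2, e3) && [&& e1 \in hedges H, e2 \in hedges H & e3 \in hedges H].
Proof.
rewrite mem_filter; congr (_ && _); apply/allpairsP/and3P.
  by move=> [[p w] [/allpairsP[[x y] [/= ? ? ->]] /= ? [-> -> ->]]].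
by move=> [? ? ?]; exists ((e1, e2), e3); split; rewrite // allpairs_f.
Qed.

Definition motif_choices (m : triple) : seq trace := choices m.1.1 m.1.2 m.2.

Definition clone_motif (H : hypergraph) (m : triple) (u : trace) : triple :=
  let S := trace_set u in
  (clone_on H S @` m.1.1, clone_on H S @` m.1.2, clone_on H S @` m.2).

Section CloneMotif.
Variables (H : hypergraph) (v : seq nat).
Hypothesis HV : edges_in_verts H.

Lemma clone_motif_mem m u : m \in motifs H v -> u \in motif_choices m ->
  clone_motif H m u \in motifs (ilth_step H) v.
Proof.
case: m => [[e1 e2] e3]; rewrite !mem_motifs /=.
move=> /andP[/and4P[n12 n23 n13 /eqP cv] /and3P[h1 h2 h3]] /is_trace_choices[t1 t2 t3].
rewrite !(clone_on_edge h1 t1, clone_on_edge h2 t2, clone_on_edge h3 t3) !andbT.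
have inj := @clone_on_inj H (trace_set u).
move: (HV h1) (HV h2) (HV h3) => s1 s2 s3.
have clone_neq A B : A `<=` hverts H -> B `<=` hverts H -> A != B ->
    clone_on H (trace_set u) @` A != clone_on H (trace_set u) @` B.
  by move=> AV BV; apply: contra_neq => /(clone_on_traces AV BV)[].
by rewrite !clone_neq // (card_vector_imfset inj s1 s2 s3) cv eqxx.
Qed.

Lemma clone_motif_inj m m' u u' : m \in motifs H v -> m' \in motifs H v ->
  u \in motif_choices m -> u' \in motif_choices m' ->
  clone_motif H m u = clone_motif H m' u' -> m = m' /\ u = u'.
Proof.
case: m m' => [[e1 e2] e3] [[e1' e2'] e3']; rewrite !mem_motifs /=.
move=> /andP[_ /and3P[h1 h2 h3]] /andP[_ /and3P[h1' h2' h3']].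
move=> /is_trace_choices[t1 t2 t3] /is_trace_choices[t1' t2' t3'].
case=> /(clone_on_traces (HV h1) (HV h1'))[E1 T1].
move=> /(clone_on_traces (HV h2) (HV h2'))[E2 T2].
move=> /(clone_on_traces (HV h3) (HV h3'))[E3 T3].
move: T1 T2 T3; rewrite t1 t1' t2 t2' t3 t3' => /oset_inj u1 /oset_inj u2 /oset_inj u3.
split; first by rewrite E1 E2 E3.
by case: u u' {t1 t2 t3 t1' t2' t3'} u1 u2 u3 => [[? ?] ?] [[? ?] ?] /= -> -> ->.
Qed.
End CloneMotif.

Lemma sumn_choices_leq_motifs H v : edges_in_verts H ->
  sumn [seq size (motif_choices m) | m <- motifs H v] <= size (motifs (ilth_step H) v).
Proof.
move=> HV; rewrite -(size_allpairs_dep (clone_motif H)); apply: uniq_leq_size.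
  apply: allpairs_uniq_dep => [|m _|]; [exact: uniq_motifs|exact: uniq_choices|].
  move=> _ _ /allpairsPdep[m [u [mM uC ->]]] /allpairsPdep[m' [u' [mM' uC' ->]]] /= E.
  by have [-> ->] := clone_motif_inj HV mM mM' uC uC' E.
by move=> _ /allpairsPdep[m [u [mM uC ->]]]; apply: clone_motif_mem.
Qed.

Lemma size_motif_choices H a b c d e f g m :
  m \in motifs H [:: a; b; c; d; e; f; g] ->
  size (motif_choices m) = (g + c.+1 * d + b.+1 * f + a.+1 * e + a.+1 * b.+1 * c.+1)%N.
Proof. by case: m => [[e1 e2] e3]; rewrite mem_motifs => /andP[/and4P[_ _ _ /eqP/size_choices]]. Qed.

Local Close Scope fset_scope.

Theorem lemma3p2 (k : nat) (H0 : hypergraph) (a b c d e f g t x : nat) :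
  2 <= k -> k_uniform k H0 ->
  motif_count (ILTH H0 t) a b c d e f g = x ->
  x * (g + c.+1 * d + b.+1 * f + a.+1 * e + a.+1 * b.+1 * c.+1)
    <= motif_count (ILTH H0 t.+1) a b c d e f g.
Proof.
move=> _ H0k; rewrite !motif_countE => <-.
have HV : edges_in_verts (ILTH H0 t) := edges_in_verts_ILTH H0k.
apply: (leq_trans _ (sumn_choices_leq_motifs _ HV)).
have /all_pred1P-> : all (pred1 (g + c.+1 * d + b.+1 * f + a.+1 * e + a.+1 * b.+1 * c.+1))
    [seq size (motif_choices m) | m <- motifs (ILTH H0 t) [:: a; b; c; d; e; f; g]].
  by apply/allP => _ /mapP[m /size_motif_choices sz ->]; rewrite /= sz.
by rewrite sumn_nseq size_map mulnC.
Qed.
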